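(* Let $S$ be a quasi-thin scheme on $X$, let $\mathbb F$ be a field of characteristic $p$, $x\in X$, and $\mathcal T=\mathcal T(x)$ the Terwilliger $\mathbb F$-algebra of $S$ with respect to $x$. Then $\mathcal T$ is semisimple if and only if either $p\neq 2$, or $p=2$ and $S$ is a thin scheme.
   Context: Let $\mathbb{F}$ be a field of characteristic $p$ ($p=0$ or a prime) and $X$ a nonempty finite set. A scheme of class $d$ on $X$ is a partition $S=\{R_0,\dots,R_d\}$ of $X\times X$ into nonempty sets such that $R_0=\{(b,b):b\in X\}$; for each $c$ there is $c'$ with $R_{c'}=\{(f,e):(e,f)\in R_c\}$; and for all $i,j,k$ the intersection number $p_{ij}^k=|\{\ell\in X:(m,\ell)\in R_i,(\ell,n)\in R_j\}|$ does not depend on $(m,n)\in R_k$. The valency of $R_a$ is $k_a=p_{aa'}^0$. $S$ is thin if all $k_a=1$ and quasi-thin if all $k_a\le 2$. For $y\in X$, $yR_a=\{z:(y,z)\in R_a\}$. $A_a\in M_X(\mathbb F)$ is the $(0,1)$ adjacency matrix of $R_a$ and $E_a^*(y)$ is the diagonal $(0,1)$-matrix with ones exactly at the diagonal positions indexed by $yR_a$. The Terwilliger $\mathbb F$-algebra $\mathcal T(y)$ is the $\mathbb F$-subalgebra of $M_X(\mathbb F)$ generated by $A_0,\dots,A_d,E_0^*(y),\dots,E_d^*(y)$. *)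

From HB Require Import structures.
From mathcomp Require Import all_boot all_order all_algebra.
Set Implicit Arguments. Unset Strict Implicit. Unset Printing Implicit Defensive.
Import GRing.Theory.
Local Open Scope ring_scope.

(* A scheme of class d on the finite set X is encoded by its relation-index
   function R : X -> X -> 'I_d.+1, with R_c = [set (e,f) | R e f = c]. *)
Definition is_scheme (X : finType) (d : nat) (R : X -> X -> 'I_d.+1) : Prop :=
  (forall c : 'I_d.+1, exists e f, R e f = c) /\
  (forall e f, R e f = ord0 <-> e = f) /\
  (forall c : 'I_d.+1, exists c' : 'I_d.+1, forall e f, R f e = c' <-> R e f = c) /\
  (* intersection numbers are well defined *)
  (forall (i j k : 'I_d.+1) (m n m' n' : X), R m n = k -> R m' n' = k ->
     #|[set l | (R m l == i) && (R l n == j)]| =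
     #|[set l | (R m' l == i) && (R l n' == j)]|).

Definition nbhd (X : finType) d (R : X -> X -> 'I_d.+1) (y : X) (a : 'I_d.+1)
  : {set X} := [set z | R y z == a].

Definition thin (X : finType) d (R : X -> X -> 'I_d.+1) : Prop :=
  forall (a : 'I_d.+1) (y : X), #|nbhd R y a| = 1%N.
Definition quasi_thin (X : finType) d (R : X -> X -> 'I_d.+1) : Prop :=
  forall (a : 'I_d.+1) (y : X), (#|nbhd R y a| <= 2)%N.

(* matrices in M_X(F) are indexed through enum_val : 'I_#|X| -> X *)
Definition adj_mx (F : fieldType) (X : finType) d (R : X -> X -> 'I_d.+1)
  (a : 'I_d.+1) : 'M[F]_#|X| :=
  \matrix_(i, j) (R (enum_val i) (enum_val j) == a)%:R.

Definition dual_idem (F : fieldType) (X : finType) d (R : X -> X -> 'I_d.+1)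
  (y : X) (a : 'I_d.+1) : 'M[F]_#|X| :=
  \matrix_(i, j) ((i == j) && (enum_val i \in nbhd R y a))%:R.

Inductive in_gen_alg (F : fieldType) (n : nat) (G : 'M[F]_n -> Prop)
  : 'M[F]_n -> Prop :=
| gen_in M : G M -> in_gen_alg G M
| one_in : in_gen_alg G 1%:M
| zero_in : in_gen_alg G 0
| add_in M N : in_gen_alg G M -> in_gen_alg G N -> in_gen_alg G (M + N)
| scale_in (c : F) M : in_gen_alg G M -> in_gen_alg G (c *: M)
| mul_in M N : in_gen_alg G M -> in_gen_alg G N -> in_gen_alg G (M *m N).

Definition terwilliger (F : fieldType) (X : finType) d (R : X -> X -> 'I_d.+1)
  (y : X) : 'M[F]_#|X| -> Prop :=
  in_gen_alg (fun M => exists a : 'I_d.+1,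
                 M = adj_mx F R a \/ M = dual_idem F R y a).

Definition is_ideal (F : fieldType) n (A I : 'M[F]_n -> Prop) : Prop :=
  (forall M, I M -> A M) /\ I 0 /\
  (forall M N, I M -> I N -> I (M + N)) /\
  (forall (c : F) M, I M -> I (c *: M)) /\
  (forall a M, A a -> I M -> I (a *m M) /\ I (M *m a)).

Definition mxprod (F : fieldType) n (s : seq 'M[F]_n) : 'M[F]_n :=
  foldr (fun M N => M *m N) 1%:M s.

Definition nilpotent_ideal (F : fieldType) n (I : 'M[F]_n -> Prop) : Prop :=
  exists k : nat, forall s : seq 'M[F]_n,
    size s = k -> (forall M, M \in s -> I M) -> mxprod s = 0.

(* a finite-dimensional algebra is semisimple iff its Jacobson radical is 0,
   i.e. iff it has no nonzero nilpotent two-sided ideal *)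
Definition semisimple_alg (F : fieldType) n (A : 'M[F]_n -> Prop) : Prop :=
  forall I, is_ideal A I -> nilpotent_ideal I -> forall M, I M -> M = 0.

From mathcomp Require Import all_boot all_order all_algebra.
Set Implicit Arguments. Unset Strict Implicit. Unset Printing Implicit Defensive.
Import GRing.Theory.
Local Open Scope ring_scope.

(* Let E_a be the dual idempotent of the subconstituent xR_a, k_a = |xR_a| its
   valency and J the all-ones matrix.  Every M in T(x) is block regular: for y
   in xR_a the sum of M over the columns xR_b depends only on a, and T(x) is
   closed under transposition.
   If k_a = 0 in F, then K = E_a J E_a is nonzero and, by block regularity,
   K C K is k_a times a multiple of K, hence 0, for every C in T(x); so the
   ideal generated by K is a nonzero square-zero ideal.
   If every k_a is nonzero in F, let M lie in a nilpotent ideal.  Then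
   tr(M N) = 0 for all N in T(x); taking N = E_b J E_a and N = E_b M^T E_a, the
   block of M on xR_a * xR_b has zero sum and zero sum of squares.  Block
   regularity then forces all its row and column sums to vanish; as k_a, k_b
   are 1 or 2, all its squared entries coincide, so it is zero.
   For a quasi-thin scheme the k_a are nonzero in F exactly when p <> 2 or S is
   thin. *)

Lemma char_poly_nilpotent (F : idomainType) n (A : 'M[F]_n) k :
  A ^+ k = 0 -> char_poly A = 'X^n.
Proof.
move=> Ak0.
set B := map_mx (@polyC F) A.
have cXB : GRing.comm ('X%:M : 'M[{poly F}]_n) B.
  by rewrite /GRing.comm -!mulmxE scalar_mxC.
have Bk0 : B ^+ k = 0 by rewrite /B -rmorphXn Ak0 raddf0.
have : char_poly A %| ('X - 0%:P) ^+ (k * n).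
  rewrite subr0 exprM -det_scalar.
  have -> : (('X ^+ k)%:M : 'M[{poly F}]_n) = 'X%:M ^+ k by rewrite rmorphXn.
  by rewrite -[_ ^+ k]subr0 -Bk0 subrXX_comm // det_mulmx dvdp_mulIl.
case/dvdp_exp_XsubCP => j _; rewrite subr0 eqp_monic ?char_poly_monic ?monicXn //.
move=> /eqP charA; have := size_char_poly A.
by rewrite charA size_polyXn => -[->].
Qed.

Lemma mxtrace_nilpotent (F : idomainType) n (A : 'M[F]_n) k :
  A ^+ k = 0 -> \tr A = 0.
Proof.
case: n A => [|n] A Ak0; first by rewrite /mxtrace big_ord0.
apply: oppr_inj; rewrite oppr0 -char_poly_trace // (char_poly_nilpotent Ak0).
by rewrite coefXn ltn_eqF.
Qed.

Lemma mxprod_nseq (F : fieldType) n (A : 'M[F]_n) k : mxprod (nseq k A) = A ^+ k.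
Proof. by elim: k => [|k IHk]; rewrite ?expr0 ?exprS -?IHk /= ?mulmxE ?idmxE. Qed.

Lemma nilpotent_ideal_mxtrace (F : fieldType) n (I : 'M[F]_n -> Prop) M :
  nilpotent_ideal I -> I M -> \tr M = 0.
Proof.
case=> k nilI IM; apply: (@mxtrace_nilpotent _ _ _ k).
rewrite -mxprod_nseq; apply: nilI; first exact: size_nseq.
by move=> N /nseqP[->].
Qed.

Section GeneratedAlgebra.
Variables (F : fieldType) (n : nat) (G : 'M[F]_n -> Prop).
Local Notation A := (in_gen_alg G).

Lemma in_gen_alg_sum (I : Type) (r : seq I) (P : pred I) (M_ : I -> 'M[F]_n) :
  (forall i, P i -> A (M_ i)) -> A (\sum_(i <- r | P i) M_ i).
Proof. by move=> AM; apply: big_ind => //; [apply: zero_in | apply: add_in]. Qed.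

Lemma in_gen_alg_tr M : (forall N, G N -> G N^T) -> A M -> A M^T.
Proof.
move=> GT; elim=> {M} [M /GT GMt | | | M N _ AM _ AN | c M _ AM | M N _ AM _ AN].
- exact: gen_in.
- by rewrite trmx1; apply: one_in.
- by rewrite trmx0; apply: zero_in.
- by rewrite linearD; apply: add_in.
- by rewrite linearZ; apply: scale_in.
- by rewrite trmx_mul; apply: mul_in.
Qed.

Definition gen_ideal (K M : 'M[F]_n) : Prop :=
  exists s : seq ('M[F]_n * 'M[F]_n),
    {in s, forall p, A p.1 /\ A p.2} /\ M = \sum_(p <- s) p.1 *m K *m p.2.

Lemma gen_ideal_is_ideal K : A K -> is_ideal A (gen_ideal K).
Proof.
move=> AK; split; last split; last split; last split.
- move=> _ [s [As ->]]; rewrite big_seq; apply: in_gen_alg_sum => p /As[Ap1 Ap2].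
  by apply: mul_in => //; apply: mul_in.
- by exists [::]; rewrite big_nil.
- move=> _ _ [s [As ->]] [t [At ->]]; exists (s ++ t); rewrite big_cat.
  by split=> // p; rewrite mem_cat => /orP[/As | /At].
- move=> c _ [s [As ->]]; exists [seq (c *: p.1, p.2) | p <- s].
  split; first by move=> _ /mapP[p /As[Ap1 Ap2] ->]; split=> //; apply: scale_in.
  by rewrite big_map scaler_sumr; apply: eq_bigr => p _; rewrite !scalemxAl.
move=> C _ AC [s [As ->]]; split.
  exists [seq (C *m p.1, p.2) | p <- s].
  split; first by move=> _ /mapP[p /As[Ap1 Ap2] ->]; split=> //; apply: mul_in.
  by rewrite big_map mulmx_sumr; apply: eq_bigr => p _; rewrite !mulmxA.
exists [seq (p.1, p.2 *m C) | p <- s].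
split; first by move=> _ /mapP[p /As[Ap1 Ap2] ->]; split=> //; apply: mul_in.
by rewrite big_map mulmx_suml; apply: eq_bigr => p _; rewrite !mulmxA.
Qed.

Lemma gen_ideal_sqr0 K :
  (forall C, A C -> K *m C *m K = 0) -> nilpotent_ideal (gen_ideal K).
Proof.
move=> KCK; exists 2%N => -[|M [|N []]] // _ Is.
have [s [As ->]] := Is M (mem_head _ _).
have [t [At ->]] : gen_ideal K N by apply: Is; rewrite !inE eqxx orbT.
rewrite /mxprod /= mulmx1 mulmx_suml big1_seq // => p /andP[_ /As[_ Ap2]].
rewrite mulmx_sumr big1_seq // => q /andP[_ /At[Aq1 _]].
have -> : p.1 *m K *m p.2 *m (q.1 *m K *m q.2) = p.1 *m (K *m (p.2 *m q.1) *m K) *m q.2.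
  by rewrite !mulmxA.
by rewrite KCK ?mulmx0 ?mul0mx //; apply: mul_in.
Qed.

Lemma not_semisimple_of_sandwich0 K :
  A K -> K != 0 -> (forall C, A C -> K *m C *m K = 0) -> ~ semisimple_alg A.
Proof.
move=> AK /eqP nzK KCK ssA; apply/nzK/(ssA _ (gen_ideal_is_ideal AK)).
  exact: gen_ideal_sqr0.
exists [:: (1%:M, 1%:M)]; rewrite big_seq1 mul1mx mulmx1.
by split=> // p /[!inE] /eqP->; split; apply: one_in.
Qed.

End GeneratedAlgebra.

Section ZeroSumBlocks.
Variables (F : idomainType) (T : finType).

Lemma sqr_eq_of_sum_eq0 (B : {set T}) (g : T -> F) :
  (#|B| <= 2)%N -> \sum_(z in B) g z = 0 -> {in B &, forall z z', g z ^+ 2 = g z' ^+ 2}.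
Proof.
move=> B2 sum0 z z' Bz Bz'; have [-> // | neq_zz'] := eqVneq z z'.
have sub2 : [set z; z'] \subset B by rewrite subUset !sub1set Bz Bz'.
have /eqP B_zz' : [set z; z'] == B.
  by rewrite eqEcard sub2 cards2 neq_zz' (leq_trans B2).
move: sum0; rewrite -B_zz' big_setU1 ?inE // big_set1 => /eqP.
by rewrite addr_eq0 => /eqP ->; rewrite sqrrN.
Qed.

Lemma eq0_of_const_sum_eq0 (A : {set T}) (g : T -> F) :
  #|A|%:R != 0 :> F -> {in A &, forall y y', g y = g y'} ->
  \sum_(y in A) g y = 0 -> {in A, forall y, g y = 0}.
Proof.
move=> nzA gconst sum0 y Ay.
have : g y * #|A|%:R = 0.
  by rewrite -{}sum0 mulr_natr -sumr_const; apply: eq_bigr => y' Ay'; apply: gconst.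
by move/eqP; rewrite mulf_eq0 (negPf nzA) orbF => /eqP.
Qed.

Lemma block_eq0 (A B : {set T}) (f : T -> T -> F) :
  (#|A| <= 2)%N -> (#|B| <= 2)%N -> #|A|%:R != 0 :> F -> #|B|%:R != 0 :> F ->
  {in A &, forall y y', \sum_(z in B) f y z = \sum_(z in B) f y' z} ->
  {in B &, forall z z', \sum_(y in A) f y z = \sum_(y in A) f y z'} ->
  \sum_(y in A) \sum_(z in B) f y z = 0 ->
  \sum_(y in A) \sum_(z in B) f y z ^+ 2 = 0 ->
  {in A & B, forall y z, f y z = 0}.
Proof.
move=> A2 B2 nzA nzB row_const col_const sum0 sqr_sum0 y0 z0 Ay0 Bz0.
have row0 := eq0_of_const_sum_eq0 nzA row_const sum0.
have col0 := eq0_of_const_sum_eq0 nzB col_const (etrans (exchange_big _ _ _ _ _ _) sum0).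
have : f y0 z0 ^+ 2 *+ #|B| *+ #|A| = 0.
  rewrite -{}sqr_sum0 -sumr_const; apply: eq_bigr => y Ay.
  rewrite -sumr_const; apply: eq_bigr => z Bz.
  rewrite (sqr_eq_of_sum_eq0 (g := f y) B2 (row0 y Ay) Bz Bz0).
  by rewrite (sqr_eq_of_sum_eq0 (g := f^~ z0) A2 (col0 z0 Bz0) Ay Ay0).
rewrite -mulrnA -mulr_natr => /eqP.
by rewrite natrM !mulf_eq0 (negPf nzA) (negPf nzB) !orbF orbb => /eqP.
Qed.
End ZeroSumBlocks.

Lemma const_mx1_sandwich (K : pzRingType) n (D : 'M[K]_n) :
  const_mx 1 *m D *m const_mx 1 = (\sum_i \sum_j D i j) *: (const_mx 1 : 'M_n).
Proof.
apply/matrixP => i j; rewrite !mxE mulr1 exchange_big.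
by apply: eq_bigr => k _; rewrite !mxE mulr1; apply: eq_bigr => l _; rewrite mxE mul1r.
Qed.

Section MatricesOverFinType.
Variables (K : pzRingType) (X : finType).
Implicit Types (M N Y : 'M[K]_#|X|) (S : {set X}).

Definition entry M (y z : X) : K := M (enum_rank y) (enum_rank z).

Lemma entryP M N : (forall y z, entry M y z = entry N y z) -> M = N.
Proof.
move=> eqMN; apply/matrixP => i j.
by rewrite -(enum_valK i) -(enum_valK j); apply: eqMN.
Qed.

Lemma sum_enum_rank (g : 'I_#|X| -> K) : \sum_i g i = \sum_y g (enum_rank y).
Proof. by rewrite [RHS]big_enum_val; apply: eq_bigr => i _; rewrite enum_valK. Qed.

Lemma entry_mul M N y z : entry (M *m N) y z = \sum_w entry M y w * entry N w z.
Proof. by rewrite /entry mxE sum_enum_rank. Qed.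

Lemma entryD M N y z : entry (M + N) y z = entry M y z + entry N y z.
Proof. by rewrite /entry mxE. Qed.

Lemma entryZ c M y z : entry (c *: M) y z = c * entry M y z.
Proof. by rewrite /entry mxE. Qed.

Lemma entry0 y z : entry 0 y z = 0.
Proof. by rewrite /entry mxE. Qed.

Lemma entry1 y z : entry 1%:M y z = (y == z)%:R.
Proof. by rewrite /entry mxE (inj_eq enum_rank_inj). Qed.

Lemma entry_tr M y z : entry M^T y z = entry M z y.
Proof. by rewrite /entry mxE. Qed.

Lemma entry_const c y z : entry (const_mx c) y z = c.
Proof. by rewrite /entry mxE. Qed.

Lemma mxtrace_entry M : \tr M = \sum_y entry M y y.
Proof. exact: sum_enum_rank. Qed.

Definition indic_mx S : 'M[K]_#|X| := diag_mx (\row_i (enum_val i \in S)%:R).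

Lemma entry_indic S y z : entry (indic_mx S) y z = (y \in S)%:R * (y == z)%:R.
Proof. by rewrite /entry !mxE enum_rankK (inj_eq enum_rank_inj) mulr_natr. Qed.

Lemma indic_mxT : indic_mx setT = 1%:M.
Proof. by apply/entryP => y z; rewrite entry_indic entry1 inE mul1r. Qed.

Lemma sum_nat_indicator (A : {pred X}) (P : pred X) :
  \sum_(z in A) (P z)%:R = #|[set z in A | P z]|%:R :> K.
Proof.
rewrite -sum1_card natr_sum [LHS]big_mkcond [RHS]big_mkcond.
by apply: eq_bigr => z _; rewrite !inE; case: (z \in A); case: (P z).
Qed.

Lemma sum_entry_indic S (A : {pred X}) y :
  \sum_(z in A) entry (indic_mx S) y z = ((y \in S) && (y \in A))%:R.
Proof.
rewrite big_mkcond (bigD1 y) //= big1 => [|z /negPf neq_zy]; last first.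
  by rewrite entry_indic eq_sym neq_zy mulr0 if_same.
by rewrite entry_indic eqxx mulr1 addr0; case: (y \in A); case: (y \in S).
Qed.

Lemma entry_indic_sandwich S Y (S' : {set X}) y z :
  entry (indic_mx S *m Y *m indic_mx S') y z = (y \in S)%:R * entry Y y z * (z \in S')%:R.
Proof. by rewrite /entry mul_mx_diag mul_diag_mx !mxE !enum_rankK. Qed.

Lemma mxtrace_mul_indic_sandwich M (S' : {set X}) Y S :
  \tr (M *m (indic_mx S' *m Y *m indic_mx S)) =
  \sum_(y in S) \sum_(z in S') entry M y z * entry Y z y.
Proof.
rewrite mxtrace_entry [RHS]big_mkcond; apply: eq_bigr => y _.
rewrite entry_mul; under eq_bigr do rewrite entry_indic_sandwich.
case: (y \in S); last by rewrite big1 // => z _; rewrite !mulr0.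
rewrite [RHS]big_mkcond; apply: eq_bigr => z _; rewrite mulr1.
by case: (z \in S'); rewrite ?mul1r ?mul0r ?mulr0.
Qed.

Lemma sum_indic_sandwich S C :
  \sum_i \sum_j (indic_mx S *m C *m indic_mx S) i j = \sum_(u in S) \sum_(v in S) entry C u v.
Proof.
rewrite sum_enum_rank [RHS]big_mkcond; apply: eq_bigr => u _.
rewrite sum_enum_rank; under eq_bigr do rewrite -/(entry _ u _) entry_indic_sandwich.
case: (u \in S); last by rewrite big1 // => v _; rewrite !mul0r.
rewrite [RHS]big_mkcond; apply: eq_bigr => v _; rewrite mul1r.
by case: (v \in S); rewrite ?mulr1 ?mulr0.
Qed.

End MatricesOverFinType.

Section TerwilligerAlgebra.
Variables (F : fieldType) (X : finType) (d : nat) (R : X -> X -> 'I_d.+1) (x : X).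
Hypothesis scheme_R : is_scheme R.
Local Notation T := (@terwilliger F X d R x).

Lemma transposed_class c : exists c', forall e f, R f e = c' <-> R e f = c.
Proof. by case: scheme_R => _ [_ [+ _]]. Qed.

Lemma card_nbhd a y z : #|nbhd R y a| = #|nbhd R z a|.
Proof.
have [a' a'E] := transposed_class a.
have nbhdE w : nbhd R w a = [set l | (R w l == a) && (R l w == a')].
  by apply/setP => l; rewrite !inE; case: eqP => //= /a'E/eqP ->.
case: scheme_R => _ [diag [_ pijk]]; rewrite !nbhdE.
by apply: (pijk _ _ ord0); apply/diag.
Qed.

Lemma nbhd_nonempty a : exists u, R x u = a.
Proof.
case: scheme_R => classes _; have [e [f Ref]] := classes a.
have : (0 < #|nbhd R x a|)%N.
  by rewrite (card_nbhd a x e); apply/card_gt0P; exists f; rewrite inE Ref.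
by case/card_gt0P => u; rewrite inE => /eqP; exists u.
Qed.

Lemma entry_adj a y z : entry (adj_mx F R a) y z = (R y z == a)%:R.
Proof. by rewrite /entry mxE !enum_rankK. Qed.

Lemma dual_idemE y a : dual_idem F R y a = indic_mx F (nbhd R y a).
Proof. by apply/matrixP => i j; rewrite !mxE; case: (i == j). Qed.

Definition subconstituent_const (g : X -> F) := forall y y', R x y = R x y' -> g y = g y'.

(* [row_regular M] says that M maps the span of the characteristic vectors of
   the subconstituents xR_b into itself. *)
Definition row_regular (M : 'M[F]_#|X|) :=
  forall b, subconstituent_const (fun y => \sum_(z in nbhd R x b) entry M y z).

Lemma row_regular_mulr M g :
  row_regular M -> subconstituent_const g ->
  subconstituent_const (fun y => \sum_w entry M y w * g w).
Proof.
move=> regM constg y y' Ryy'.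
rewrite !(partition_big (R x) predT) //=; apply: eq_bigr => c _.
have [w0 /eqP Rxw0 | no_c] := pickP (fun w => R x w == c); last first.
  by rewrite !big_pred0 // => w; rewrite no_c.
have gc w : R x w == c -> g w = g w0 by move=> /eqP Rxw; apply: constg; rewrite Rxw Rxw0.
under eq_bigr => w /gc -> do []; under [RHS]eq_bigr => w /gc -> do [].
have nbhdE : (fun w => w \in nbhd R x c) =1 (fun w => R x w == c) by move=> w; rewrite inE.
by rewrite -!mulr_suml -!(eq_bigl _ _ nbhdE) (regM c y y').
Qed.

Lemma row_regular0 : row_regular 0.
Proof. by move=> b y y' _; rewrite !big1 // => z _; rewrite entry0. Qed.

Lemma row_regularD M N : row_regular M -> row_regular N -> row_regular (M + N).
Proof.
move=> regM regN b y y' Ryy'.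
under eq_bigr do rewrite entryD; under [RHS]eq_bigr do rewrite entryD.
by rewrite !big_split /= (regM b y y') ?(regN b y y').
Qed.

Lemma row_regularZ c M : row_regular M -> row_regular (c *: M).
Proof.
move=> regM b y y' Ryy'.
under eq_bigr do rewrite entryZ; under [RHS]eq_bigr do rewrite entryZ.
by rewrite -!mulr_sumr (regM b y y').
Qed.

Lemma row_regularM M N : row_regular M -> row_regular N -> row_regular (M *m N).
Proof.
move=> regM regN b y y' Ryy'.
under eq_bigr do rewrite entry_mul; under [RHS]eq_bigr do rewrite entry_mul.
rewrite exchange_big [RHS]exchange_big /=.
under eq_bigr do rewrite -mulr_sumr; under [RHS]eq_bigr do rewrite -mulr_sumr.
exact: (row_regular_mulr regM (regN b)).
Qed.

Lemma row_regular_indic (S : {set X}) :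
  (forall y y', R x y = R x y' -> (y \in S) = (y' \in S)) -> row_regular (indic_mx F S).
Proof. by move=> constS b y y' Ryy'; rewrite !sum_entry_indic (constS y y') // !inE Ryy'. Qed.

Lemma row_regular_adj a : row_regular (adj_mx F R a).
Proof.
have [a' a'E] := transposed_class a.
move=> b y y' Ryy'.
under eq_bigr do rewrite entry_adj; under [RHS]eq_bigr do rewrite entry_adj.
have setE w : [set z in nbhd R x b | R w z == a] = [set l | (R x l == b) && (R l w == a')].
  by apply/setP => z; rewrite !inE; congr (_ && _); apply/eqP/eqP => /a'E.
rewrite !sum_nat_indicator !setE; congr (_%:R).
by case: scheme_R => _ [_ [_ pijk]]; apply: (pijk _ _ (R x y)).
Qed.

Lemma row_regular_terwilliger M : T M -> row_regular M.
Proof.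
elim=> {M} [M [a [->|->]] | | | M N _ regM _ regN | c M _ regM | M N _ regM _ regN].
- exact: row_regular_adj.
- by rewrite dual_idemE; apply: row_regular_indic => y y' Ryy'; rewrite !inE Ryy'.
- by rewrite -indic_mxT; apply: row_regular_indic => y y' _; rewrite !inE.
- exact: row_regular0.
- exact: row_regularD.
- exact: row_regularZ.
- exact: row_regularM.
Qed.

Lemma terwilliger_tr M : T M -> T M^T.
Proof.
apply: in_gen_alg_tr => _ [a [->|->]].
- have [a' a'E] := transposed_class a; exists a'; left.
  apply/entryP => y z; rewrite entry_tr !entry_adj.
  by have -> : (R z y == a) = (R y z == a') by apply/eqP/eqP => /a'E.
- by exists a; right; rewrite dual_idemE tr_diag_mx.
Qed.

Lemma col_regular_terwilliger M b :
  T M -> subconstituent_const (fun z => \sum_(y in nbhd R x b) entry M y z).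
Proof.
move=> /terwilliger_tr /row_regular_terwilliger regMt z z' Rzz'.
have := regMt b z z' Rzz'; under eq_bigr do rewrite entry_tr.
by under [in X in _ = X -> _]eq_bigr do rewrite entry_tr.
Qed.

Lemma terwilliger_const1 : T (const_mx 1).
Proof.
have -> : const_mx 1 = \sum_c adj_mx F R c.
  apply/entryP => y z; rewrite entry_const /entry summxE (bigD1 (R y z)) //= big1.
    by rewrite -/(entry _ y z) entry_adj eqxx addr0.
  by move=> c /negPf neq_c; rewrite -/(entry _ y z) entry_adj eq_sym neq_c.
by apply: in_gen_alg_sum => c _; apply: gen_in; exists c; left.
Qed.

Lemma terwilliger_dual_sandwich a b Y :
  T Y -> T (dual_idem F R x a *m Y *m dual_idem F R x b).
Proof.
have TE c : T (dual_idem F R x c) by apply: gen_in; exists c; right.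
by move=> TY; apply: mul_in (TE b); apply: mul_in (TE a) TY.
Qed.

Lemma not_semisimple_of_valency_eq0 a :
  #|nbhd R x a|%:R = 0 :> F -> ~ semisimple_alg T.
Proof.
move=> ka0; have [u0 Rxu0] := nbhd_nonempty a.
set E := dual_idem F R x a; set K := E *m const_mx 1 *m E.
apply: (@not_semisimple_of_sandwich0 _ _ _ K).
- exact: terwilliger_dual_sandwich terwilliger_const1.
- apply/eqP => /(congr1 (fun M => entry M u0 u0)).
  rewrite entry0 /K /E dual_idemE entry_indic_sandwich entry_const !inE Rxu0 eqxx.
  by rewrite !mulr1 => /eqP; rewrite oner_eq0.
move=> C TC.
have -> : K *m C *m K = E *m (const_mx 1 *m (E *m C *m E) *m const_mx 1) *m E.
  by rewrite !mulmxA.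
rewrite const_mx1_sandwich -scalemxAr -scalemxAl /E dual_idemE sum_indic_sandwich.
rewrite (eq_bigr (fun=> \sum_(v in nbhd R x a) entry C u0 v)); last first.
  move=> u; rewrite inE => /eqP Rxu.
  by apply: (row_regular_terwilliger TC); rewrite Rxu.
by rewrite sumr_const -mulr_natr ka0 mulr0 scale0r.
Qed.

Lemma semisimple_of_valency_neq0 :
  quasi_thin R -> (forall a, #|nbhd R x a|%:R != 0 :> F) -> semisimple_alg T.
Proof.
move=> qthin kneq0 I [sub_IT [_ [_ [_ mulI]]]] nilI M IM.
have TM := sub_IT M IM.
have sandwich_trace0 Y a b : T Y ->
    \sum_(y in nbhd R x a) \sum_(z in nbhd R x b) entry M y z * entry Y z y = 0.
  move=> TY; rewrite -mxtrace_mul_indic_sandwich -!dual_idemE.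
  exact/(nilpotent_ideal_mxtrace nilI)/(mulI _ _ (terwilliger_dual_sandwich _ _ TY) IM).2.
apply/entryP => y0 z0; rewrite entry0.
apply: (block_eq0 (qthin _ _) (qthin _ _) (kneq0 _) (kneq0 _)); rewrite ?inE //.
- move=> y y'; rewrite !inE => /eqP Ry /eqP Ry'.
  by apply: (row_regular_terwilliger TM); rewrite Ry Ry'.
- move=> z z'; rewrite !inE => /eqP Rz /eqP Rz'.
  by apply: (col_regular_terwilliger _ TM); rewrite Rz Rz'.
- have := sandwich_trace0 _ (R x y0) (R x z0) terwilliger_const1.
  by under eq_bigr do under eq_bigr do rewrite entry_const mulr1.
- have := sandwich_trace0 _ (R x y0) (R x z0) (terwilliger_tr TM).
  by under eq_bigr do under eq_bigr do rewrite entry_tr -expr2.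
Qed.

Lemma valency_neq0_iff : quasi_thin R ->
  (forall a, #|nbhd R x a|%:R != 0 :> F) <->
  2%N \notin [pchar F] \/ (2%N \in [pchar F] /\ thin R).
Proof.
move=> qthin.
have valency12 a : #|nbhd R x a| = 1%N \/ #|nbhd R x a| = 2%N.
  have [u Rxu] := nbhd_nonempty a.
  have : (0 < #|nbhd R x a|)%N by apply/card_gt0P; exists u; rewrite inE Rxu.
  by have := qthin a x; case: #|_| => [|[|[|]]] //; auto.
have thinE : thin R <-> forall a, #|nbhd R x a| = 1%N.
  by split=> thinR a => [|y]; rewrite ?(card_nbhd a y x) thinR.
rewrite inE /=; split=> [kneq0 | [nz2 a | [_ /thinE thinR a]]].
- have [z2 | nz2] := eqVneq (2%:R : F) 0; last by left.
  right; split=> //; apply/thinE => a.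
  by case: (valency12 a) => // k2; move: (kneq0 a); rewrite k2 z2 eqxx.
- by case: (valency12 a) => ->; rewrite ?oner_eq0.
- by rewrite thinR oner_eq0.
Qed.

End TerwilligerAlgebra.

Theorem theoremB (F : fieldType) (X : finType) (d : nat)
  (R : X -> X -> 'I_d.+1) (x : X) :
  is_scheme R -> quasi_thin R ->
  (semisimple_alg (@terwilliger F X d R x) <->
     (2%N \notin [pchar F]) \/ ((2%N \in [pchar F]) /\ thin R)).
Proof.
move=> scheme_R qthin; have kneq0_iff := valency_neq0_iff F x scheme_R qthin.
split=> [ssT | /kneq0_iff kneq0]; last exact: semisimple_of_valency_neq0.
apply/kneq0_iff => a; apply/eqP => ka0.
exact: (not_semisimple_of_valency_eq0 scheme_R ka0 ssT).
Qed.
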